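(* For real $\alpha>0$ and $\beta>0$ define $$f(\alpha,\beta)=\sum_{n=-\infty}^{\infty}\frac{\alpha(-1)^n}{\sqrt{\alpha^2n^2+\alpha\beta^2}\,\sinh\!\left(\pi\sqrt{\alpha^2n^2+\alpha\beta^2}\right)}.$$ Then $f(\alpha,\beta)=f(1/\alpha,\beta)$.
   Context: The series converges absolutely. *)

From Stdlib Require Import Reals ZArith.
Open Scope R_scope.

Definition fterm (alpha beta : R) (n : Z) : R :=
  let s := sqrt (alpha ^ 2 * (IZR n) ^ 2 + alpha * beta ^ 2) in
  alpha * (-1) ^ (Z.abs_nat n) / (s * sinh (PI * s)).

Fixpoint symsum (g : Z -> R) (N : nat) : R :=
  match N with
  | O => g 0%Z
  | S m => symsum g m + g (Z.of_nat (S m)) + g (- Z.of_nat (S m))%Z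
  end.

(* The bilateral series sum_{n in Z} g n converges (symmetrically) to l.
   (The series in question converges absolutely, so symmetric summation
   gives its value.) *)
Definition bilateral_sum (g : Z -> R) (l : R) : Prop :=
  Un_cv (symsum g) l.

From Stdlib Require Import Reals ZArith Lra Lia.
From Coquelicot Require Import Coquelicot.
Open Scope R_scope.

(* The key fact is the partial-fraction expansion
     pi / (s sinh (pi s)) = sum_{m in Z} (-1)^m / (s^2 + m^2)        (s > 0).
   Applied with s^2 = alpha^2 n^2 + alpha beta^2, it turns f(alpha, beta) into the iterated
   sum over n, then m, of  alpha (-1)^(n+m) / (pi (alpha^2 n^2 + alpha beta^2 + m^2)).
   Dividing numerator and denominator by alpha^2 shows that summing the same double series
   over m first gives f(1/alpha, beta). The inner sums are alternating, so their tails are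
   bounded by their first terms, which are summable in n uniformly in the truncation; by
   Moore-Osgood the two iterated sums agree.

   The expansion itself is proved by Abel summation. The cosine coefficients of cosh (s x)
   on [0, pi] are (-1)^m s sinh (s pi) / (s^2 + m^2), so integrating cosh (s x) against
   the Poisson kernel P_r gives s sinh (s pi) times the Abel means of the series; as
   r -> 1, P_r concentrates at 0, where cosh (s x) - 1 vanishes to second order. Since the
   series converges absolutely, its Abel means control its symmetric partial sums. *)

Lemma symsum_S (g : Z -> R) (N : nat) :
  symsum g (S N) = symsum g N + g (Z.of_nat (S N)) + g (- Z.of_nat (S N))%Z.
Proof. reflexivity. Qed.

Lemma symsum_ext (f g : Z -> R) (N : nat) :
  (forall n, f n = g n) -> symsum f N = symsum g N.
Proof. intros H; induction N as [|N IH]; rewrite ?symsum_S, ?IH, ?H; simpl; auto. Qed.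

Lemma symsum_plus (f g : Z -> R) (N : nat) :
  symsum (fun n => f n + g n) N = symsum f N + symsum g N.
Proof. induction N as [|N IH]; rewrite ?symsum_S, ?IH; simpl; ring. Qed.

Lemma symsum_minus (f g : Z -> R) (N : nat) :
  symsum (fun n => f n - g n) N = symsum f N - symsum g N.
Proof. induction N as [|N IH]; rewrite ?symsum_S, ?IH; simpl; ring. Qed.

Lemma symsum_scal (c : R) (f : Z -> R) (N : nat) :
  symsum (fun n => c * f n) N = c * symsum f N.
Proof. induction N as [|N IH]; rewrite ?symsum_S, ?IH; simpl; ring. Qed.

Lemma symsum_abs_le (f h : Z -> R) (N : nat) :
  (forall n, Rabs (f n) <= h n) -> Rabs (symsum f N) <= symsum h N.
Proof.
  intros H; induction N as [|N IH]; [apply H|rewrite !symsum_S].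
  pose proof (H (Z.of_nat (S N))); pose proof (H (- Z.of_nat (S N))%Z).
  pose proof (Rabs_triang (symsum f N) (f (Z.of_nat (S N)))).
  pose proof (Rabs_triang (symsum f N + f (Z.of_nat (S N))) (f (- Z.of_nat (S N))%Z)).
  lra.
Qed.

Lemma symsum_comm (g : Z -> Z -> R) (N M : nat) :
  symsum (fun n => symsum (g n) M) N = symsum (fun m => symsum (fun n => g n m) N) M.
Proof.
  induction N as [|N IH]; [reflexivity|].
  rewrite symsum_S, IH, <- !symsum_plus; reflexivity.
Qed.

Lemma symsum_even (h : Z -> R) (N : nat) :
  (forall n, h (- n)%Z = h n) ->
  symsum h N = 2 * sum_f_R0 (fun n => h (Z.of_nat n)) N - h 0%Z.
Proof.
  intros Hh; induction N as [|N IH]; [simpl; ring|].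
  rewrite symsum_S, IH, Hh; simpl; ring.
Qed.

Lemma Un_cv_symsum (u : Z -> nat -> R) (l : Z -> R) (N : nat) :
  (forall n, Un_cv (u n) (l n)) -> Un_cv (fun M => symsum (fun n => u n M) N) (symsum l N).
Proof.
  intros H; induction N as [|N IH]; [apply H|].
  rewrite symsum_S; apply CV_plus; [apply CV_plus|]; auto.
Qed.

Lemma sum_f_R0_split_le (t : nat -> R) (a b : R) (J N : nat) :
  (1 <= J)%nat -> 0 <= a -> 0 <= b ->
  (forall n, (n <= J)%nat -> t n <= a) ->
  (forall n, (J < n)%nat -> t n <= b / INR n ^ 2) ->
  sum_f_R0 t N <= a * INR (S J) + b / INR J.
Proof.
  intros HJ Ha Hb Hhead Htail.
  assert (HJR : 1 <= INR J) by (apply (le_INR 1); lia).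
  assert (Hhead_sum : forall K, (K <= J)%nat -> sum_f_R0 t K <= a * INR (S K)).
  { intros K HK; rewrite <- sum_cte; apply sum_Rle; intros; apply Hhead; lia. }
  (* beyond J, compare with the telescoping sum of 1/(n-1) - 1/n *)
  assert (Htele : forall K, (J <= K)%nat ->
            sum_f_R0 t K <= a * INR (S J) + b * (/ INR J - / INR K)).
  { induction K as [|K IH]; intros HK; [lia|].
    destruct (Nat.eq_dec (S K) J) as [<-|HKJ].
    - rewrite Rminus_diag, Rmult_0_r, Rplus_0_r; apply Hhead_sum; lia.
    - assert (HKR : 1 <= INR K) by (apply (le_INR 1); lia).
      specialize (IH ltac:(lia)); specialize (Htail (S K) ltac:(lia)).
      rewrite (S_INR K) in Htail |- *; simpl sum_f_R0.
      enough (b / (INR K + 1) ^ 2 <= b * (/ INR K - / (INR K + 1))) by lra.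
      replace (b * (/ INR K - / (INR K + 1))) with (b / (INR K * (INR K + 1))) by (field; lra).
      apply Rmult_le_compat_l; auto. apply Rinv_le_contravar; simpl; nra. }
  destruct (le_lt_dec N J) as [HN|HN].
  - pose proof (le_INR _ _ (le_n_S _ _ HN)); pose proof (Hhead_sum N HN).
    assert (0 <= b / INR J) by (apply Rdiv_le_0_compat; lra). nra.
  - pose proof (Htele N ltac:(lia)).
    assert (0 <= b * / INR N) by (apply Rmult_le_pos; auto; apply Rlt_le, Rinv_0_lt_compat, lt_0_INR; lia).
    unfold Rdiv; lra.
Qed.

Lemma Un_cv_Rabs_le (u : nat -> R) (l e : R) (N0 : nat) :
  Un_cv u l -> (forall n, (N0 <= n)%nat -> Rabs (u n) <= e) -> Rabs l <= e.
Proof.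
  intros Hu Hb; destruct (Rle_lt_dec (Rabs l) e) as [|Hl]; auto.
  destruct (Hu (Rabs l - e)) as [N HN]; [lra|].
  specialize (HN (max N N0) ltac:(lia)); specialize (Hb (max N N0) ltac:(lia)).
  unfold R_dist in HN; pose proof (Rabs_triang_inv l (u (max N N0))).
  rewrite Rabs_minus_sym in HN; lra.
Qed.

Lemma Un_cv_const (c : R) : Un_cv (fun _ => c) c.
Proof. intros e He; exists 0%nat; intros; unfold R_dist; rewrite Rminus_diag, Rabs_R0; lra. Qed.

Lemma Un_cv_inv_S (D : R) : Un_cv (fun M => D / INR (S M)) 0.
Proof.
  apply (Un_cv_ext (fun M => D * RinvN M)); [intros M; rewrite S_INR; reflexivity|].
  rewrite <- (Rmult_0_r D); apply CV_mult; [apply Un_cv_const|apply RinvN_cv].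
Qed.

Lemma Un_cv_of_geometric_error (u : nat -> R) (l : R) :
  (forall eps, 0 < eps ->
     exists q K, 0 <= q < 1 /\ forall M, Rabs (u M - l) <= eps + K * q ^ M) ->
  Un_cv u l.
Proof.
  intros H eps Heps.
  destruct (H (eps / 2)) as [q [K [Hq HM]]]; [lra|].
  destruct (pow_lt_1_zero q) with (y := eps / (2 * (Rabs K + 1))) as [N HN].
  { rewrite Rabs_pos_eq; lra. }
  { pose proof (Rabs_pos K); apply Rdiv_lt_0_compat; lra. }
  exists N; intros M HMN; unfold R_dist.
  specialize (HN M HMN); specialize (HM M).
  assert (HK : K * q ^ M <= Rabs K * Rabs (q ^ M)) by (rewrite <- Rabs_mult; apply Rle_abs).
  assert (Hsmall : Rabs K * Rabs (q ^ M) < (Rabs K + 1) * (eps / (2 * (Rabs K + 1)))).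
  { pose proof (Rabs_pos K); pose proof (Rabs_pos (q ^ M)); nra. }
  replace ((Rabs K + 1) * (eps / (2 * (Rabs K + 1)))) with (eps / 2) in Hsmall
    by (pose proof (Rabs_pos K); field; lra).
  lra.
Qed.

Lemma moore_osgood (T : nat -> nat -> R) (a b eps : nat -> R) :
  (forall N, Un_cv (T N) (a N)) ->
  (forall M, Un_cv (fun N => T N M) (b M)) ->
  Un_cv eps 0 ->
  (forall N M M', (M <= M')%nat -> Rabs (T N M' - T N M) <= eps M) ->
  exists L, Un_cv a L /\ Un_cv b L.
Proof.
  intros Ha Hb He Hunif.
  assert (Ha_near : forall N M, Rabs (a N - T N M) <= eps M).
  { intros N M; apply (Un_cv_Rabs_le (fun M' => T N M' - T N M) _ _ M); [|auto].
    apply CV_minus; [apply Ha|apply Un_cv_const]. }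
  assert (Hcauchy : Cauchy_crit a).
  { intros e He'.
    destruct (He (e / 4)) as [M HM]; [lra|].
    specialize (HM M (le_n _)); unfold R_dist in HM; rewrite Rminus_0_r in HM.
    destruct (Hb M (e / 4)) as [N0 HN0]; [lra|].
    exists N0; intros n m Hn Hm; unfold R_dist in *.
    pose proof (Ha_near n M); pose proof (Ha_near m M).
    pose proof (HN0 n Hn); pose proof (HN0 m Hm); pose proof (Rle_abs (eps M)).
    pose proof (Rabs_triang (a n - T n M) (T n M - b M)).
    pose proof (Rabs_triang (T m M - b M) (a m - T m M)).
    pose proof (Rabs_triang ((a n - T n M) + (T n M - b M)) (- ((T m M - b M) + (a m - T m M))))
      as Htri.
    rewrite Rabs_Ropp in Htri.
    replace (a n - a m) with ((a n - T n M) + (T n M - b M) + - ((T m M - b M) + (a m - T m M)))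
      by ring.
    lra. }
  destruct (Rcomplete.R_complete a Hcauchy) as [L HL].
  exists L; split; auto.
  assert (Hb_near : forall M, Rabs (L - b M) <= eps M).
  { intro M; apply (Un_cv_Rabs_le (fun N => a N - T N M) _ _ 0); [apply CV_minus; auto|].
    intros; apply Ha_near. }
  intros e He'; destruct (He e He') as [M0 HM0]; exists M0; intros M HM.
  specialize (HM0 M HM); specialize (Hb_near M); unfold R_dist in *.
  rewrite Rminus_0_r in HM0; rewrite Rabs_minus_sym.
  pose proof (Rle_abs (eps M)); lra.
Qed.

Lemma symsum_iterated_cv (g : Z -> Z -> R) (a b : Z -> R) (eps : nat -> R) :
  (forall n, Un_cv (symsum (g n)) (a n)) ->
  (forall m, Un_cv (symsum (fun n => g n m)) (b m)) ->
  Un_cv eps 0 ->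
  (forall N M M', (M <= M')%nat ->
     Rabs (symsum (fun n => symsum (g n) M') N - symsum (fun n => symsum (g n) M) N) <= eps M) ->
  exists L, bilateral_sum a L /\ bilateral_sum b L.
Proof.
  intros Hrow Hcol Heps Htail.
  apply (moore_osgood (fun N M => symsum (fun n => symsum (g n) M) N) _ _ eps); auto.
  - intros N; apply (Un_cv_symsum (fun n M => symsum (g n) M)), Hrow.
  - intros M; apply (Un_cv_ext (fun N => symsum (fun m => symsum (fun n => g n m) N) M)).
    + intros N; symmetry; apply symsum_comm.
    + apply (Un_cv_symsum (fun m N => symsum (fun n => g n m) N)), Hcol.
Qed.

Lemma alternating_sum_tail (a : nat -> R) (M q : nat) :
  (forall m, 0 <= a m) -> (forall m, a (S m) <= a m) ->
  0 <= (-1) ^ S M * (sum_f_R0 (fun m => (-1) ^ m * a m) (M + q)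
                     - sum_f_R0 (fun m => (-1) ^ m * a m) M) <= a (S M).
Proof.
  intros Hpos Hdec; revert M; induction q as [|q IH]; intros M.
  - rewrite Nat.add_0_r, Rminus_diag, Rmult_0_r; split; [lra|apply Hpos].
  - specialize (IH (S M)); rewrite <- Nat.add_succ_comm.
    set (S_ := sum_f_R0 (fun m => (-1) ^ m * a m)) in *.
    assert (Hsq : (-1) ^ S M * (-1) ^ S M = 1)
      by (rewrite <- Rpow_mult_distr; replace (-1 * -1) with 1 by ring; apply pow1).
    replace ((-1) ^ S M * (S_ (S M + q)%nat - S_ M))
      with (a (S M) - (-1) ^ S (S M) * (S_ (S M + q)%nat - S_ (S M)))
      by (unfold S_; rewrite tech5; change ((-1) ^ S (S M)) with (-1 * (-1) ^ S M);
          replace (a (S M)) with ((-1) ^ S M * (-1) ^ S M * a (S M)) at 1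
            by (rewrite Hsq; ring);
          ring).
    pose proof (Hdec (S M)); lra.
Qed.

Lemma alternating_sum_tail_abs (a : nat -> R) (M M' : nat) :
  (forall m, 0 <= a m) -> (forall m, a (S m) <= a m) -> (M <= M')%nat ->
  Rabs (sum_f_R0 (fun m => (-1) ^ m * a m) M' - sum_f_R0 (fun m => (-1) ^ m * a m) M)
  <= a (S M).
Proof.
  intros Hpos Hdec HM; replace M' with (M + (M' - M))%nat by lia.
  pose proof (alternating_sum_tail a M (M' - M) Hpos Hdec) as Htail.
  rewrite <- (Rabs_pos_eq _ (proj1 Htail)), Rabs_mult, pow_1_abs, Rmult_1_l in Htail.
  apply Htail.
Qed.

Lemma cosh_ge_1 (a : R) : 1 <= cosh a.
Proof.
  unfold cosh; rewrite exp_Ropp.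
  pose proof (exp_pos a) as Hu.
  assert (Hw : exp a * / exp a = 1) by (field; lra).
  pose proof (pow2_ge_0 (exp a - / exp a)).
  nra.
Qed.

Lemma cosh_le_cosh (a b : R) : 0 <= a <= b -> cosh a <= cosh b.
Proof.
  intros [Ha Hab]; unfold cosh; rewrite !exp_Ropp.
  pose proof (exp_ineq1_le a); pose proof (exp_pos a).
  assert (exp a <= exp b) by (destruct Hab as [Hlt|<-]; [left; apply exp_increasing|]; lra).
  assert (exp a * / exp a = 1) by (field; lra).
  assert (Hb : exp b * / exp b = 1) by (field; lra).
  assert (0 < / exp b) by (apply Rinv_0_lt_compat; lra).
  assert (/ exp a * / exp b <= 1) by nra.
  assert (/ exp a - / exp b = / exp a * / exp b * (exp b - exp a)) by (field; lra).
  nra.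
Qed.

Lemma sinh_pos (a : R) : 0 < a -> 0 < sinh a.
Proof. intros Ha; rewrite <- sinh_0; apply sinh_lt, Ha. Qed.

Lemma cosh_sub_1_le (y : R) : 0 <= y -> cosh y - 1 <= y ^ 2 * cosh y.
Proof.
  intros Hy.
  set (u := exp (y / 2)); set (w := / u).
  assert (Hu1 : 1 <= u) by (pose proof (exp_ineq1_le (y / 2)); unfold u; lra).
  assert (Huw : u * w = 1) by (unfold w; field; lra).
  assert (Hexp : exp y = u * u) by (unfold u; rewrite <- exp_plus; f_equal; field).
  assert (Hexpm : exp (- y) = w * w)
    by (unfold w; rewrite exp_Ropp, Hexp; field; lra).
  assert (Hw : 1 - y <= w * w) by (rewrite <- Hexpm; apply exp_ineq1_le).
  (* cosh y - 1 = (u - w)^2 / 2 and 0 <= u - w = u (1 - w^2) <= y u *)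
  assert (Hdiff : 0 <= u - w <= y * u) by (split; nra).
  unfold cosh; rewrite Hexp, Hexpm.
  assert (0 <= w * w) by nra.
  nra.
Qed.

Lemma sqr_le_16_one_sub_cos (x : R) : 0 <= x <= PI -> x ^ 2 <= 16 * (1 - cos x).
Proof.
  intros [H0 H1]; pose proof PI_4.
  destruct (Rle_lt_dec x (PI / 2)) as [Hx|Hx].
  - destruct (cos_bound x 0) as [_ Hc]; [lra|lra|].
    unfold cos_approx, cos_term in Hc; simpl in Hc.
    assert (Hx2 : 0 <= x ^ 2 <= 4) by (simpl; split; nra).
    assert (x ^ 4 <= 4 * x ^ 2) by (replace (x ^ 4) with (x ^ 2 * x ^ 2) by ring; nra).
    assert (cos x <= 1 - x ^ 2 / 2 + x ^ 4 / 24) by (eapply Rle_trans; [exact Hc|right; field]).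
    lra.
  - assert (cos x <= 0) by (apply cos_le_0; lra).
    nra.
Qed.

Lemma pow_between_0_1 (r : R) (m : nat) : 0 <= r <= 1 -> 0 <= r ^ m <= 1.
Proof. intros Hr; split; [apply pow_le; lra|rewrite <- (pow1 m); apply pow_incr; lra]. Qed.

Lemma one_sub_pow_le (r : R) (m : nat) : 0 <= r <= 1 -> 1 - r ^ m <= INR m * (1 - r).
Proof.
  intros Hr; induction m as [|m IH]; [simpl; lra|].
  rewrite S_INR; simpl.
  pose proof (pow_between_0_1 r m Hr).
  nra.
Qed.

Lemma sin_nat_PI (n : nat) : sin (INR n * PI) = 0.
Proof.
  induction n as [|n IH]; [rewrite Rmult_0_l; apply sin_0|].
  rewrite S_INR, Rmult_plus_distr_r, Rmult_1_l, neg_sin, IH; ring.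
Qed.

Lemma cos_nat_PI (n : nat) : cos (INR n * PI) = (-1) ^ n.
Proof.
  induction n as [|n IH]; [rewrite Rmult_0_l; apply cos_0|].
  rewrite S_INR, Rmult_plus_distr_r, Rmult_1_l, neg_cos, IH; simpl; ring.
Qed.

(** * Partial fractions of 1 / sinh by Abel summation *)

Lemma is_RInt_ext_eq (f g : R -> R) (a b l l' : R) :
  (forall x, f x = g x) -> l = l' -> is_RInt f a b l -> is_RInt g a b l'.
Proof. intros Hfg <- Hf; apply (is_RInt_ext f); auto. Qed.

Lemma is_RInt_sum_f_R0 (f : nat -> R -> R) (I : nat -> R) (a b : R) (N : nat) :
  (forall m, (m <= N)%nat -> is_RInt (f m) a b (I m)) ->
  is_RInt (fun x => sum_f_R0 (fun m => f m x) N) a b (sum_f_R0 I N).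
Proof.
  intros H; induction N as [|N IH]; [apply H; lia|].
  apply (is_RInt_plus (V := R_NormedModule)); [apply IH; intros; apply H|apply H]; lia.
Qed.

Lemma is_RInt_cos_nat (m : nat) :
  is_RInt (fun x => cos (INR m * x)) 0 PI (match m with O => PI | S _ => 0 end).
Proof.
  destruct m as [|m].
  - pose proof (is_RInt_const (V := R_NormedModule) 0 PI 1) as Hconst.
    change (scal (PI - 0) 1) with ((PI - 0) * 1) in Hconst.
    rewrite Rminus_0_r, Rmult_1_r in Hconst.
    apply (is_RInt_ext (fun _ => 1)); [|exact Hconst].
    intros x _; simpl; rewrite Rmult_0_l, cos_0; reflexivity.
  - set (k := INR (S m)); assert (Hk : 0 < k) by (apply lt_0_INR; lia).
    change (is_RInt (fun x => cos (k * x)) 0 PI 0).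
    replace 0 with (minus (sin (k * PI) / k) (sin (k * 0) / k)) at 2.
    2: { unfold minus, plus, opp; simpl.
         unfold k in *; rewrite Rmult_0_r, sin_0, sin_nat_PI; field; lra. }
    apply (is_RInt_derive (V := R_CompleteNormedModule) (fun x => sin (k * x) / k)).
    + intros x _; auto_derive; [auto|field; lra].
    + intros x _; apply (ex_derive_continuous (V := R_NormedModule)); auto_derive; auto.
Qed.

Lemma is_RInt_cosh_cos (s : R) (m : nat) : 0 < s ->
  is_RInt (fun x => cosh (s * x) * cos (INR m * x)) 0 PI
    ((-1) ^ m * s * sinh (s * PI) / (s ^ 2 + INR m ^ 2)).
Proof.
  intros Hs; set (k := INR m).
  assert (Hk : 0 <= k) by apply pos_INR.
  set (F x := (s * sinh (s * x) * cos (k * x) + k * cosh (s * x) * sin (k * x)) / (s ^ 2 + k ^ 2)).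
  replace ((-1) ^ m * s * sinh (s * PI) / (s ^ 2 + k ^ 2)) with (minus (F PI) (F 0)).
  2: { unfold minus, plus, opp, F; simpl.
       rewrite !Rmult_0_r, sinh_0, sin_0; unfold k in *; rewrite sin_nat_PI, cos_nat_PI.
       field; nra. }
  apply (is_RInt_derive (V := R_CompleteNormedModule) F).
  - intros y _; unfold F, sinh, cosh; auto_derive; [auto|field; nra].
  - intros y _; apply (ex_derive_continuous (V := R_NormedModule)); unfold cosh; auto_derive; auto.
Qed.

(* [poisson_partial r M x] is sum_{|m| <= M} r^|m| e^(imx), the truncated Poisson kernel,
   and [abel_partial s r M] is sum_{|m| <= M} r^|m| (-1)^m / (s^2 + m^2); both are written
   as twice the sum over m >= 0 minus the m = 0 term. *)
Definition poisson_partial (r : R) (M : nat) (x : R) : R :=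
  2 * sum_f_R0 (fun m => r ^ m * cos (INR m * x)) M - 1.

Definition abel_partial (s r : R) (M : nat) : R :=
  2 * sum_f_R0 (fun m => r ^ m * (-1) ^ m / (s ^ 2 + INR m ^ 2)) M - / s ^ 2.

Lemma is_RInt_poisson_partial (r : R) (M : nat) : is_RInt (poisson_partial r M) 0 PI PI.
Proof.
  set (I m := r ^ m * match m with O => PI | S _ => 0 end).
  assert (HI : sum_f_R0 I M = PI)
    by (induction M as [|M IH]; [unfold I; simpl; ring|simpl; rewrite IH; unfold I; ring]).
  assert (Hsum := is_RInt_sum_f_R0 (fun m x => r ^ m * cos (INR m * x)) I 0 PI M
                    (fun m _ => is_RInt_scal _ _ _ (r ^ m) _ (is_RInt_cos_nat m))).
  pose proof (is_RInt_minus (V := R_NormedModule) _ _ _ _ _ _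
                (is_RInt_scal _ _ _ 2 _ Hsum) (is_RInt_cos_nat 0)) as H.
  refine (is_RInt_ext_eq _ _ _ _ _ _ _ _ H).
  - intros x; unfold poisson_partial, minus, plus, opp, scal; simpl.
    rewrite Rmult_0_l, cos_0; reflexivity.
  - rewrite HI; unfold minus, plus, opp, scal; simpl; unfold mult; simpl; ring.
Qed.

Lemma is_RInt_cosh_poisson_partial (s r : R) (M : nat) : 0 < s ->
  is_RInt (fun x => cosh (s * x) * poisson_partial r M x) 0 PI
    (s * sinh (s * PI) * abel_partial s r M).
Proof.
  intros Hs.
  assert (Hsum := is_RInt_sum_f_R0 (fun m x => r ^ m * (cosh (s * x) * cos (INR m * x)))
                    (fun m => r ^ m * ((-1) ^ m * s * sinh (s * PI) / (s ^ 2 + INR m ^ 2)))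
                    0 PI M (fun m _ => is_RInt_scal _ _ _ (r ^ m) _ (is_RInt_cosh_cos s m Hs))).
  pose proof (is_RInt_minus (V := R_NormedModule) _ _ _ _ _ _
                (is_RInt_scal _ _ _ 2 _ Hsum) (is_RInt_cosh_cos s 0 Hs)) as H.
  refine (is_RInt_ext_eq _ _ _ _ _ _ _ _ H).
  - intros x; unfold poisson_partial, minus, plus, opp, scal; simpl; unfold mult; simpl.
    rewrite Rmult_0_l, cos_0.
    replace (sum_f_R0 (fun m => r ^ m * (cosh (s * x) * cos (INR m * x))) M)
      with (sum_f_R0 (fun m => r ^ m * cos (INR m * x)) M * cosh (s * x))
      by (rewrite Rmult_comm, scal_sum; apply sum_eq; intros; ring).
    ring.
  - replace (sum_f_R0 (fun m => r ^ m * ((-1) ^ m * s * sinh (s * PI) / (s ^ 2 + INR m ^ 2))) M)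
      with (s * sinh (s * PI) * sum_f_R0 (fun m => r ^ m * (-1) ^ m / (s ^ 2 + INR m ^ 2)) M).
    + unfold abel_partial, minus, plus, opp, scal; simpl; unfold mult; simpl.
      field; nra.
    + rewrite scal_sum; apply sum_eq; intros m _.
      assert (0 <= INR m) by apply pos_INR.
      field; nra.
Qed.

Lemma poisson_partial_closed_form (r : R) (M : nat) (x : R) :
  (1 - 2 * r * cos x + r ^ 2) * poisson_partial r M x =
  1 - r ^ 2 - 2 * r ^ S M * cos (INR (S M) * x) + 2 * r ^ S (S M) * cos (INR M * x).
Proof.
  induction M as [|M IH].
  - unfold poisson_partial; simpl; rewrite !Rmult_0_l, !Rmult_1_l, cos_0; ring.
  - assert (Hstep : poisson_partial r (S M) x
                    = poisson_partial r M x + 2 * (r ^ S M * cos (INR (S M) * x)))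
      by (unfold poisson_partial; rewrite tech5; ring).
    assert (Hcos : cos (INR (S (S M)) * x)
                   = 2 * cos x * cos (INR (S M) * x) - cos (INR M * x)).
    { replace (INR (S (S M)) * x) with (INR (S M) * x + x) by (rewrite (S_INR (S M)); ring).
      replace (INR M * x) with (INR (S M) * x - x) by (rewrite (S_INR M); ring).
      rewrite cos_plus, cos_minus; ring. }
    rewrite Hstep, Rmult_plus_distr_l, IH, Hcos; simpl; ring.
Qed.

Lemma poisson_partial_remainder_le (r : R) (M : nat) (x : R) : 0 < r < 1 ->
  Rabs ((1 - 2 * r * cos x + r ^ 2) * poisson_partial r M x - (1 - r ^ 2)) <= 4 * r ^ S M.
Proof.
  intros Hr; rewrite poisson_partial_closed_form.
  pose proof (COS_bound (INR (S M) * x)); pose proof (COS_bound (INR M * x)).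
  assert (0 < r ^ S (S M) <= r ^ S M).
  { split; [apply pow_lt; lra|].
    change (r * r ^ S M <= r ^ S M); pose proof (pow_lt r (S M) ltac:(lra)); nra. }
  apply Rabs_le; split; nra.
Qed.

Lemma poisson_kernel_mul_le (c K r x : R) :
  0 < r < 1 -> 0 <= K -> 0 <= c <= K * (1 - cos x) ->
  c * ((1 - r ^ 2) / (1 - 2 * r * cos x + r ^ 2)) <= K * (1 - r) / r.
Proof.
  intros Hr HK Hc; pose proof (COS_bound x).
  set (D := 1 - 2 * r * cos x + r ^ 2).
  assert (HD : 2 * r * (1 - cos x) <= D) by (unfold D; nra).
  assert (HD0 : 0 < D) by (unfold D; nra).
  assert (HcD : c / D <= K / (2 * r)).
  { apply (Rmult_le_reg_r (2 * r * D)); [nra|].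
    replace (c / D * (2 * r * D)) with (c * (2 * r)) by (field; lra).
    replace (K / (2 * r) * (2 * r * D)) with (K * D) by (field; lra).
    assert (c * (2 * r) <= K * (1 - cos x) * (2 * r)) by (apply Rmult_le_compat_r; lra).
    assert (K * (2 * r * (1 - cos x)) <= K * D) by (apply Rmult_le_compat_l; lra).
    lra. }
  assert (0 <= c / D) by (apply Rdiv_le_0_compat; lra).
  replace (c * ((1 - r ^ 2) / D)) with (c / D * ((1 - r) * (1 + r))) by (field; lra).
  replace (K * (1 - r) / r) with (K / (2 * r) * (2 * (1 - r))) by (field; lra).
  apply Rmult_le_compat; [lra|nra|lra|nra].
Qed.

(* Near x = 0 the factor cosh (s x) - 1 vanishes like 1 - cos x, which compensates the peak
   of the Poisson kernel. *)
Lemma cosh_sub_1_le_one_sub_cos (s x : R) : 0 <= s -> 0 <= x <= PI ->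
  cosh (s * x) - 1 <= 16 * s ^ 2 * cosh (s * PI) * (1 - cos x).
Proof.
  intros Hs Hx.
  assert (Hsx : 0 <= s * x <= s * PI) by (split; nra).
  pose proof (cosh_sub_1_le (s * x) ltac:(lra)) as Hsub.
  pose proof (sqr_le_16_one_sub_cos x Hx); pose proof (cosh_le_cosh _ _ Hsx).
  pose proof (cosh_ge_1 (s * x)).
  assert (0 <= s ^ 2) by (simpl; nra); assert (0 <= x ^ 2) by (simpl; nra).
  replace ((s * x) ^ 2) with (s ^ 2 * x ^ 2) in Hsub by ring.
  assert (s ^ 2 * x ^ 2 * cosh (s * x) <= s ^ 2 * (16 * (1 - cos x)) * cosh (s * PI))
    by (apply Rmult_le_compat; [nra|lra|apply Rmult_le_compat_l; lra|lra]).
  lra.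
Qed.

Lemma cosh_sub_1_mul_poisson_le (s r : R) (M : nat) (x : R) :
  0 < s -> 0 < r < 1 -> 0 <= x <= PI ->
  Rabs ((cosh (s * x) - 1) * poisson_partial r M x)
  <= cosh (s * PI) * (16 * s ^ 2 * (1 - r) / r + 4 * r ^ S M / (1 - r) ^ 2).
Proof.
  intros Hs Hr Hx.
  set (D := 1 - 2 * r * cos x + r ^ 2).
  set (E := D * poisson_partial r M x - (1 - r ^ 2)).
  set (c := cosh (s * x) - 1); set (C := cosh (s * PI)).
  pose proof (COS_bound x).
  assert (HD1 : (1 - r) ^ 2 <= D) by (unfold D; nra).
  assert (Hr2 : 0 < (1 - r) ^ 2) by (apply pow_lt; lra).
  assert (HP : poisson_partial r M x = (1 - r ^ 2) / D + E / D) by (unfold E; field; lra).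
  assert (HE : Rabs E <= 4 * r ^ S M) by apply poisson_partial_remainder_le, Hr.
  assert (Hc : 0 <= c <= C).
  { assert (0 <= s * x <= s * PI) by (split; nra).
    pose proof (cosh_ge_1 (s * x)); pose proof (cosh_le_cosh (s * x) (s * PI)).
    unfold c, C; lra. }
  pose proof (cosh_sub_1_le_one_sub_cos s x ltac:(lra) Hx) as Hc_cos; fold c C in Hc_cos.
  rewrite HP, !Rmult_plus_distr_l.
  eapply Rle_trans; [apply Rabs_triang|apply Rplus_le_compat].
  - assert (0 <= (1 - r ^ 2) / D) by (apply Rdiv_le_0_compat; simpl; nra).
    rewrite Rabs_pos_eq by (apply Rmult_le_pos; lra).
    replace (C * (16 * s ^ 2 * (1 - r) / r)) with (16 * s ^ 2 * C * (1 - r) / r) by (field; lra).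
    apply poisson_kernel_mul_le; [lra| |lra].
    pose proof (cosh_ge_1 (s * PI)); assert (0 <= s ^ 2) by (simpl; nra); unfold C; nra.
  - unfold Rdiv; rewrite Rabs_mult, Rabs_mult, (Rabs_pos_eq c), (Rabs_pos_eq (/ D))
      by (lra || (apply Rlt_le, Rinv_0_lt_compat; lra)).
    assert (/ D <= / (1 - r) ^ 2) by (apply Rinv_le_contravar; lra).
    assert (0 <= Rabs E) by apply Rabs_pos.
    assert (0 <= / D) by (apply Rlt_le, Rinv_0_lt_compat; lra).
    assert (c * Rabs E <= C * (4 * r ^ S M)) by (apply Rmult_le_compat; lra).
    assert (c * Rabs E * / D <= C * (4 * r ^ S M) * / (1 - r) ^ 2)
      by (apply Rmult_le_compat; [nra|lra|lra|lra]).
    lra.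
Qed.

Lemma abel_partial_error (s r : R) (M : nat) : 0 < s -> 0 < r < 1 ->
  Rabs (s * sinh (s * PI) * abel_partial s r M - PI)
  <= PI * (cosh (s * PI) * (16 * s ^ 2 * (1 - r) / r + 4 * r ^ S M / (1 - r) ^ 2)).
Proof.
  intros Hs Hr.
  pose proof (is_RInt_minus (V := R_NormedModule) _ _ _ _ _ _
                (is_RInt_cosh_poisson_partial s r M Hs) (is_RInt_poisson_partial r M)) as H.
  assert (Hint : is_RInt (fun x => (cosh (s * x) - 1) * poisson_partial r M x) 0 PI
                   (s * sinh (s * PI) * abel_partial s r M - PI)).
  { refine (is_RInt_ext_eq _ _ _ _ _ _ _ _ H);
      [intros x|]; unfold minus, plus, opp; simpl; ring. }
  pose proof PI_RGT_0.
  rewrite <- (is_RInt_unique _ _ _ _ Hint).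
  match goal with |- _ <= PI * ?B => replace (PI * B) with ((PI - 0) * B) by ring end.
  apply abs_RInt_le_const; [lra|eexists; exact Hint|].
  intros x Hx; apply cosh_sub_1_mul_poisson_le; auto.
Qed.

Lemma abel_partial_sub_le (s r : R) (J M : nat) : 0 < s -> 0 <= r <= 1 -> (1 <= J)%nat ->
  Rabs (abel_partial s 1 M - abel_partial s r M) <= 2 * ((1 - r) * INR (S J) + 1 / INR J).
Proof.
  intros Hs Hr HJ.
  set (a m := / (s ^ 2 + INR m ^ 2)).
  assert (Ha0 : forall m, 0 < a m)
    by (intros m; pose proof (pos_INR m); apply Rinv_0_lt_compat; simpl; nra).
  assert (Hdiff : abel_partial s 1 M - abel_partial s r M
                  = 2 * sum_f_R0 (fun m => (-1) ^ m * ((1 - r ^ m) * a m)) M).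
  { unfold abel_partial.
    replace (sum_f_R0 (fun m => (-1) ^ m * ((1 - r ^ m) * a m)) M)
      with (sum_f_R0 (fun m => 1 ^ m * (-1) ^ m / (s ^ 2 + INR m ^ 2)) M
            - sum_f_R0 (fun m => r ^ m * (-1) ^ m / (s ^ 2 + INR m ^ 2)) M).
    - ring.
    - rewrite <- minus_sum; apply sum_eq; intros m _; rewrite pow1; unfold a, Rdiv; ring. }
  rewrite Hdiff, Rabs_mult, (Rabs_pos_eq 2) by lra.
  apply Rmult_le_compat_l; [lra|].
  eapply Rle_trans; [apply Rsum_abs|].
  apply sum_f_R0_split_le; auto; [lra|lra| |].
  - intros m _.
    assert (Hm : INR m * a m <= 1).
    { unfold a; pose proof (Ha0 m); pose proof (pos_INR m).
      apply (Rmult_le_reg_r (s ^ 2 + INR m ^ 2)); [simpl; nra|].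
      replace (INR m * / (s ^ 2 + INR m ^ 2) * (s ^ 2 + INR m ^ 2)) with (INR m)
        by (field; simpl; nra).
      destruct (Nat.eq_dec m 0) as [->|Hm0]; [simpl; nra|].
      assert (1 <= INR m) by (apply (le_INR 1); lia).
      assert (INR m <= INR m ^ 2) by (simpl; nra).
      assert (0 <= s ^ 2) by (simpl; nra).
      lra. }
    pose proof (one_sub_pow_le r m Hr); pose proof (Ha0 m); pose proof (pow_between_0_1 r m Hr).
    rewrite Rabs_mult, pow_1_abs, Rmult_1_l, Rabs_pos_eq by nra.
    nra.
  - intros m Hm.
    assert (HmR : 1 <= INR m) by (apply (le_INR 1); lia).
    pose proof (pow_between_0_1 r m Hr).
    rewrite Rabs_mult, pow_1_abs, Rmult_1_l, Rabs_pos_eq by (pose proof (Ha0 m); nra).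
    assert (a m <= 1 / INR m ^ 2).
    { unfold a, Rdiv; rewrite Rmult_1_l; apply Rinv_le_contravar; simpl; nra. }
    pose proof (Ha0 m); nra.
Qed.

Lemma abel_partial_1_error (s r : R) (J M : nat) :
  0 < s -> 1 / 2 <= r < 1 -> (1 <= J)%nat ->
  let c := PI * cosh (s * PI) / (s * sinh (s * PI)) in
  Rabs (abel_partial s 1 M - PI / (s * sinh (s * PI)))
  <= (1 - r) * (2 * INR (S J) + 32 * s ^ 2 * c) + 2 / INR J
     + 4 * c * r / (1 - r) ^ 2 * r ^ M.
Proof.
  intros Hs Hr HJ c.
  assert (HK : 0 < s * sinh (s * PI))
    by (pose proof PI_RGT_0; apply Rmult_lt_0_compat; auto; apply sinh_pos; nra).
  set (K := s * sinh (s * PI)) in *.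
  assert (Hc : 0 <= c)
    by (pose proof PI_RGT_0; pose proof (cosh_ge_1 (s * PI));
        apply Rdiv_le_0_compat; nra).
  pose proof (abel_partial_sub_le s r J M Hs ltac:(lra) HJ) as Htauber.
  pose proof (abel_partial_error s r M Hs ltac:(lra)) as Habel.
  replace (abel_partial s 1 M - PI / K)
    with ((abel_partial s 1 M - abel_partial s r M) + (K * abel_partial s r M - PI) / K)
    by (field; lra).
  eapply Rle_trans; [apply Rabs_triang|].
  rewrite Rabs_div, (Rabs_pos_eq K) by lra.
  assert (Habel' : Rabs (K * abel_partial s r M - PI) / K
                   <= c * (16 * s ^ 2 * (1 - r) / r + 4 * r ^ S M / (1 - r) ^ 2)).
  { apply (Rmult_le_reg_r K); [lra|].
    unfold c; replace (Rabs (K * abel_partial s r M - PI) / K * K)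
      with (Rabs (K * abel_partial s r M - PI)) by (field; lra).
    eapply Rle_trans; [exact Habel|right; field; split; lra]. }
  assert (16 * s ^ 2 * (1 - r) / r <= 32 * s ^ 2 * (1 - r)).
  { assert (0 <= s ^ 2) by (simpl; nra).
    apply (Rmult_le_reg_r r); [lra|].
    replace (16 * s ^ 2 * (1 - r) / r * r) with (16 * s ^ 2 * (1 - r)) by (field; lra).
    assert (0 <= s ^ 2 * (1 - r)) by (apply Rmult_le_pos; lra).
    nra. }
  assert (c * (16 * s ^ 2 * (1 - r) / r) <= c * (32 * s ^ 2 * (1 - r)))
    by (apply Rmult_le_compat_l; auto).
  replace (c * (16 * s ^ 2 * (1 - r) / r + 4 * r ^ S M / (1 - r) ^ 2))
    with (c * (16 * s ^ 2 * (1 - r) / r) + 4 * c * r / (1 - r) ^ 2 * r ^ M) in Habel'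
    by (simpl; field; lra).
  unfold Rdiv in *; rewrite Rmult_1_l in Htauber.
  lra.
Qed.

Lemma alternating_inverse_square_even (A : R) (m : Z) :
  (-1) ^ Z.abs_nat (- m) / (A + IZR (- m) ^ 2) = (-1) ^ Z.abs_nat m / (A + IZR m ^ 2).
Proof.
  rewrite opp_IZR; replace (Z.abs_nat (- m)) with (Z.abs_nat m) by (destruct m; reflexivity).
  f_equal; ring.
Qed.

Lemma symsum_alternating_inverse_square (s : R) (M : nat) : 0 < s ->
  symsum (fun m => (-1) ^ Z.abs_nat m / (s ^ 2 + IZR m ^ 2)) M = abel_partial s 1 M.
Proof.
  intros Hs; rewrite symsum_even by apply alternating_inverse_square_even.
  unfold abel_partial; simpl IZR; f_equal.
  - f_equal; apply sum_eq; intros m _.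
    rewrite Zabs2Nat.id, <- INR_IZR_INZ, pow1, Rmult_1_l; reflexivity.
  - simpl; field; nra.
Qed.

Theorem Un_cv_symsum_alternating_inverse_square (A : R) : 0 < A ->
  Un_cv (symsum (fun m => (-1) ^ Z.abs_nat m / (A + IZR m ^ 2)))
        (PI / (sqrt A * sinh (PI * sqrt A))).
Proof.
  intros HA; set (s := sqrt A).
  assert (Hs : 0 < s) by (apply sqrt_lt_R0, HA).
  assert (HAs : A = s ^ 2) by (unfold s; rewrite pow2_sqrt; lra).
  rewrite HAs.
  apply (Un_cv_ext (abel_partial s 1));
    [intros M; symmetry; apply symsum_alternating_inverse_square, Hs|].
  rewrite (Rmult_comm PI s).
  set (c := PI * cosh (s * PI) / (s * sinh (s * PI))).
  assert (Hc : 0 <= c)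
    by (pose proof PI_RGT_0; pose proof (cosh_ge_1 (s * PI));
        apply Rdiv_le_0_compat; [nra|apply Rmult_lt_0_compat; auto; apply sinh_pos; nra]).
  apply Un_cv_of_geometric_error; intros eps Heps.
  destruct (archimed_cor1 (eps / 4)) as [J [HJ HJ0]]; [lra|].
  assert (HJR : 1 <= INR J) by (apply (le_INR 1); lia).
  set (B := 2 * INR (S J) + 32 * s ^ 2 * c + 1).
  assert (HB : 0 < B) by (unfold B; assert (0 <= s ^ 2) by (simpl; nra); pose proof (pos_INR (S J)); nra).
  set (d := Rmin (1 / 2) (eps / (2 * B))).
  assert (Hd : 0 < d <= 1 / 2)
    by (split; [apply Rmin_glb_lt; [lra|apply Rdiv_lt_0_compat; lra]|apply Rmin_l]).
  assert (HdB : d * B <= eps / 2).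
  { apply (Rle_trans _ (eps / (2 * B) * B)); [apply Rmult_le_compat_r; [lra|apply Rmin_r]|].
    right; field; lra. }
  exists (1 - d), (4 * c * (1 - d) / (1 - (1 - d)) ^ 2); split; [lra|intros M].
  eapply Rle_trans; [apply (abel_partial_1_error s (1 - d) J M Hs ltac:(lra) ltac:(lia))|].
  fold c; replace (1 - (1 - d)) with d by ring.
  assert (2 / INR J < eps / 2) by (unfold Rdiv; lra).
  assert (d * (2 * INR (S J) + 32 * s ^ 2 * c) <= d * B) by (unfold B; nra).
  lra.
Qed.

(** * The double series *)

Definition double_term (alpha beta : R) (n m : Z) : R :=
  alpha * (-1) ^ (Z.abs_nat n + Z.abs_nat m)
  / (PI * (alpha ^ 2 * IZR n ^ 2 + alpha * beta ^ 2 + IZR m ^ 2)).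

Lemma double_term_swap (alpha beta : R) (n m : Z) : 0 < alpha -> 0 < beta ->
  double_term alpha beta n m = double_term (/ alpha) beta m n.
Proof.
  intros Ha Hb; unfold double_term; pose proof PI_RGT_0.
  assert (0 <= IZR n ^ 2) by (simpl; nra); assert (0 <= IZR m ^ 2) by (simpl; nra).
  assert (0 < alpha * beta ^ 2) by (apply Rmult_lt_0_compat; [|apply pow_lt]; lra).
  assert (0 <= alpha ^ 2 * IZR n ^ 2) by (apply Rmult_le_pos; [simpl; nra|lra]).
  rewrite Nat.add_comm.
  replace ((/ alpha) ^ 2 * IZR m ^ 2 + / alpha * beta ^ 2 + IZR n ^ 2)
    with ((alpha ^ 2 * IZR n ^ 2 + alpha * beta ^ 2 + IZR m ^ 2) / alpha ^ 2) by (field; lra).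
  field; repeat split; nra.
Qed.

Lemma double_term_factor (alpha beta : R) (n m : Z) :
  double_term alpha beta n m
  = alpha * (-1) ^ Z.abs_nat n / PI
    * ((-1) ^ Z.abs_nat m / (alpha ^ 2 * IZR n ^ 2 + alpha * beta ^ 2 + IZR m ^ 2)).
Proof.
  unfold double_term, Rdiv; rewrite pow_add, Rinv_mult; ring.
Qed.

Lemma Un_cv_double_term_row (alpha beta : R) (n : Z) : 0 < alpha -> 0 < beta ->
  Un_cv (symsum (double_term alpha beta n)) (fterm alpha beta n).
Proof.
  intros Ha Hb; pose proof PI_RGT_0.
  set (A := alpha ^ 2 * IZR n ^ 2 + alpha * beta ^ 2).
  assert (HA : 0 < A).
  { assert (0 <= alpha ^ 2 * IZR n ^ 2) by (apply Rmult_le_pos; simpl; nra).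
    assert (0 < alpha * beta ^ 2) by (apply Rmult_lt_0_compat; [|apply pow_lt]; lra).
    unfold A; lra. }
  apply (Un_cv_ext (fun M => alpha * (-1) ^ Z.abs_nat n / PI
                      * symsum (fun m => (-1) ^ Z.abs_nat m / (A + IZR m ^ 2)) M)).
  { intros M; rewrite <- symsum_scal; apply symsum_ext; intros m.
    symmetry; apply double_term_factor. }
  replace (fterm alpha beta n)
    with (alpha * (-1) ^ Z.abs_nat n / PI * (PI / (sqrt A * sinh (PI * sqrt A)))).
  - apply CV_mult; [apply Un_cv_const|apply Un_cv_symsum_alternating_inverse_square, HA].
  - assert (Hs : 0 < sqrt A) by (apply sqrt_lt_R0, HA).
    assert (0 < sinh (PI * sqrt A)) by (apply sinh_pos; nra).
    unfold fterm; fold A; field; repeat split; lra.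
Qed.

Lemma double_term_row_tail (alpha beta : R) (n : Z) (M M' : nat) :
  0 < alpha -> 0 < beta -> (M <= M')%nat ->
  Rabs (symsum (double_term alpha beta n) M' - symsum (double_term alpha beta n) M)
  <= 2 * alpha / PI / (alpha ^ 2 * IZR n ^ 2 + INR (S M) ^ 2).
Proof.
  intros Ha Hb HM; pose proof PI_RGT_0.
  set (A := alpha ^ 2 * IZR n ^ 2 + alpha * beta ^ 2).
  assert (HA0 : 0 <= alpha ^ 2 * IZR n ^ 2) by (apply Rmult_le_pos; simpl; nra).
  assert (HA : alpha ^ 2 * IZR n ^ 2 < A)
    by (assert (0 < alpha * beta ^ 2) by (apply Rmult_lt_0_compat; [|apply pow_lt]; lra);
        unfold A; lra).
  set (c := alpha * (-1) ^ Z.abs_nat n / PI); set (a m := / (A + INR m ^ 2)).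
  assert (Hrow : forall K, symsum (double_term alpha beta n) K
                 = c * (2 * sum_f_R0 (fun m => (-1) ^ m * a m) K - / A)).
  { intros K; rewrite (symsum_ext _ (fun m => c * ((-1) ^ Z.abs_nat m / (A + IZR m ^ 2))))
      by (intros m; apply double_term_factor).
    rewrite symsum_scal, symsum_even by apply alternating_inverse_square_even.
    simpl IZR; f_equal; f_equal; [|simpl; field; lra].
    f_equal; apply sum_eq; intros m _; unfold a.
    rewrite Zabs2Nat.id, <- INR_IZR_INZ; reflexivity. }
  assert (Ha0 : forall m, 0 <= a m)
    by (intros m; pose proof (pos_INR m); apply Rlt_le, Rinv_0_lt_compat; simpl; nra).
  assert (Hdec : forall m, a (S m) <= a m).
  { intros m; unfold a; pose proof (pos_INR m); apply Rinv_le_contravar; [simpl; nra|].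
    rewrite S_INR; simpl; nra. }
  rewrite !Hrow.
  replace (c * (2 * sum_f_R0 (fun m => (-1) ^ m * a m) M' - / A)
           - c * (2 * sum_f_R0 (fun m => (-1) ^ m * a m) M - / A))
    with (2 * c * (sum_f_R0 (fun m => (-1) ^ m * a m) M' - sum_f_R0 (fun m => (-1) ^ m * a m) M))
    by ring.
  assert (Hc : Rabs (2 * c) = 2 * alpha / PI).
  { unfold c, Rdiv; rewrite !Rabs_mult, pow_1_abs, !Rabs_pos_eq; [ring|..];
      try apply Rlt_le, Rinv_0_lt_compat; lra. }
  rewrite Rabs_mult, Hc; unfold Rdiv at 2; apply Rmult_le_compat;
    [apply Rdiv_le_0_compat; lra|apply Rabs_pos|lra|].
  eapply Rle_trans; [apply alternating_sum_tail_abs; auto|].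
  assert (0 < INR (S M) ^ 2) by (apply pow_lt, lt_0_INR; lia).
  unfold a; apply Rinv_le_contravar; lra.
Qed.

Lemma symsum_inverse_square_le (alpha : R) (J N : nat) : 0 < alpha -> (1 <= J)%nat ->
  symsum (fun n => / (alpha ^ 2 * IZR n ^ 2 + INR J ^ 2)) N <= (4 + 2 / alpha ^ 2) / INR J.
Proof.
  intros Ha HJ.
  assert (HJR : 1 <= INR J) by (apply (le_INR 1); lia).
  assert (Ha2 : 0 < alpha ^ 2) by (apply pow_lt, Ha).
  rewrite symsum_even by (intros n; rewrite opp_IZR; f_equal; ring).
  assert (Hpos : forall n : nat, 0 < alpha ^ 2 * IZR (Z.of_nat n) ^ 2 + INR J ^ 2)
    by (intros n; assert (0 <= IZR (Z.of_nat n) ^ 2) by (simpl; nra); simpl in *; nra).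
  assert (Hsum : sum_f_R0 (fun n => / (alpha ^ 2 * IZR (Z.of_nat n) ^ 2 + INR J ^ 2)) N
                 <= / INR J ^ 2 * INR (S J) + / alpha ^ 2 / INR J).
  { apply sum_f_R0_split_le; auto.
    - apply Rlt_le, Rinv_0_lt_compat; simpl; nra.
    - apply Rlt_le, Rinv_0_lt_compat, Ha2.
    - intros n _; apply Rinv_le_contravar; [simpl; nra|].
      assert (0 <= alpha ^ 2 * IZR (Z.of_nat n) ^ 2)
        by (apply Rmult_le_pos; [lra|simpl; nra]).
      lra.
    - intros n Hn; rewrite <- INR_IZR_INZ.
      assert (1 <= INR n) by (apply (le_INR 1); lia).
      unfold Rdiv; rewrite <- Rinv_mult; apply Rinv_le_contravar;
        [apply Rmult_lt_0_compat; [lra|apply pow_lt; lra]|].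
      assert (0 < INR J ^ 2) by (simpl; nra); lra. }
  assert (0 < / (alpha ^ 2 * IZR 0 ^ 2 + INR J ^ 2)) by (apply Rinv_0_lt_compat, (Hpos 0%nat)).
  replace ((4 + 2 / alpha ^ 2) / INR J)
    with (2 * (2 / INR J + / alpha ^ 2 / INR J)) by (field; lra).
  assert (/ INR J ^ 2 * INR (S J) <= 2 / INR J).
  { rewrite S_INR; apply (Rmult_le_reg_r (INR J ^ 2)); [simpl; nra|].
    replace (/ INR J ^ 2 * (INR J + 1) * INR J ^ 2) with (INR J + 1) by (field; lra).
    replace (2 / INR J * INR J ^ 2) with (2 * INR J) by (field; lra).
    lra. }
  lra.
Qed.

Lemma double_sum_tail (alpha beta : R) (N M M' : nat) :
  0 < alpha -> 0 < beta -> (M <= M')%nat ->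
  Rabs (symsum (fun n => symsum (double_term alpha beta n) M') N
        - symsum (fun n => symsum (double_term alpha beta n) M) N)
  <= 2 * alpha / PI * ((4 + 2 / alpha ^ 2) / INR (S M)).
Proof.
  intros Ha Hb HM; pose proof PI_RGT_0.
  rewrite <- symsum_minus.
  eapply Rle_trans; [apply symsum_abs_le; intros n; apply double_term_row_tail; auto|].
  rewrite (symsum_ext _ (fun n => 2 * alpha / PI * / (alpha ^ 2 * IZR n ^ 2 + INR (S M) ^ 2)))
    by reflexivity.
  rewrite symsum_scal.
  apply Rmult_le_compat_l; [apply Rdiv_le_0_compat; lra|].
  apply symsum_inverse_square_le; [lra|lia].
Qed.

Theorem mainTheorem1 (alpha beta : R) (Ha : 0 < alpha) (Hb : 0 < beta) :
  exists l : R,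
    bilateral_sum (fterm alpha beta) l /\
    bilateral_sum (fterm (/ alpha) beta) l.
Proof.
  assert (Hia : 0 < / alpha) by (apply Rinv_0_lt_compat, Ha).
  apply (symsum_iterated_cv (double_term alpha beta) _ _
           (fun M => 2 * alpha / PI * ((4 + 2 / alpha ^ 2) / INR (S M)))).
  - intros n; apply Un_cv_double_term_row; auto.
  - intros m; apply (Un_cv_ext (symsum (double_term (/ alpha) beta m))).
    + intros N; apply symsum_ext; intros n; symmetry; apply double_term_swap; auto.
    + apply Un_cv_double_term_row; auto.
  - rewrite <- (Rmult_0_r (2 * alpha / PI)).
    apply CV_mult; [apply Un_cv_const|apply Un_cv_inv_S].
  - intros N M M' HM; apply double_sum_tail; auto.
Qed.
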